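(* There exist a comparable abstract numeration system $\mathcal{S}$ and an $\mathcal{S}$-automatic infinite word $\mathbf{x}$ such that the winning shift $W(X)$ of the orbit closure $X$ of $\mathbf{x}$ has infinite coding dimension.
   Context: ANS: $\mathcal{S}=(L,\prec)$ with $L$ an infinite language and $\prec$ a total order on $L$ of order type $\omega$; $\mathrm{rep}(n)$ is the $n$-th word of $L$; tuples are represented by left-padding component representations with a new symbol $\#$ to equal length; $Y\subseteq\mathbb{N}^d$ is $\mathcal{S}$-recognizable if $\mathrm{rep}(Y)$ is regular. $\mathcal{S}$ is comparable if $\{(x,y):x\le y\}$ is $\mathcal{S}$-recognizable. $\mathbf{x}$ is $\mathcal{S}$-automatic if a DFA with output outputs $\mathbf{x}[n]$ on input $\mathrm{rep}(n)$ for all $n\ge0$. Winning shift: for $X\subseteq A^{\mathbb{N}}$ and a choice sequence $\alpha\in\{0,\dots,|A|-1\}^{\mathbb{N}}$, Alice and Bob play infinitely many rounds; in round $j$ Alice chooses $A_j\subseteq A$ with $|A_j|=\alpha_j+1$ and Bob chooses $a_j\in A_j$; Alice wins if $a_0a_1\cdots\in X$. $W(X)$ is the set of $\alpha$ for which Alice has a winning strategy. Infinite coding dimension: no $d$ bounds $\sum_iy_i$ over $\mathbf{y}\in W(X)$. *)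

From mathcomp Require Import all_boot.
Set Implicit Arguments. Unset Strict Implicit. Unset Printing Implicit Defensive.

Record dfa (A : finType) := DFA {
  dfa_state : finType;
  dfa_start : dfa_state;
  dfa_trans : dfa_state -> A -> dfa_state;
  dfa_final : pred dfa_state }.

Definition dfa_accepts (A : finType) (D : dfa A) (w : seq A) : bool :=
  @dfa_final A D (foldl (@dfa_trans A D) (@dfa_start A D) w).

Definition regular (A : finType) (Lang : seq A -> Prop) : Prop :=
  exists D : dfa A, forall w, dfa_accepts D w <-> Lang w.

Record dfao (A B : finType) := DFAO {
  dfao_state : finType;
  dfao_start : dfao_state;
  dfao_trans : dfao_state -> A -> dfao_state;
  dfao_out : dfao_state -> B }.

Definition dfao_eval (A B : finType) (M : dfao A B) (w : seq A) : B :=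
  @dfao_out A B M (foldl (@dfao_trans A B M) (@dfao_start A B M) w).

(* S = (L, ≺) with L ⊆ Σ* infinite and ≺ a total order on L of order type ω.
   Such an S is the same as the order isomorphism (N,<) -> (L,≺), i.e. an
   injective map rep : nat -> seq Σ with L = range rep and
   rep m ≺ rep n  <->  m < n.  rep n is the n-th word of L. *)
Record ANS := MkANS {
  ans_sigma : finType;
  rep : nat -> seq ans_sigma;
  rep_inj : injective rep }.

Definition ans_lang (S : ANS) (w : seq (ans_sigma S)) : Prop :=
  exists n, rep S n = w.
Definition ans_lt (S : ANS) (u v : seq (ans_sigma S)) : Prop :=
  exists m n, rep S m = u /\ rep S n = v /\ m < n.

(* Letters for d-tuples: d-tuples of (Σ ∪ {#}), with None playing #. *)
Definition tletter (S : ANS) (d : nat) := {ffun 'I_d -> option (ans_sigma S)}.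

(* rep of a d-tuple: left-pad each component representation with # to the
   common (maximal) length, and read the result as a word over tuples. *)
Definition rep_tuple (S : ANS) (d : nat) (y : 'I_d -> nat)
  : seq (tletter S d) :=
  let m := \max_(i < d) size (rep S (y i)) in
  mkseq (fun k => [ffun i : 'I_d =>
           let w := rep S (y i) in
           let p := m - size w in
           if k < p then None else nth None (map Some w) (k - p)]) m.

Definition S_recognizable (S : ANS) (d : nat) (Y : ('I_d -> nat) -> Prop)
  : Prop :=
  regular (fun w : seq (tletter S d) => exists y, Y y /\ rep_tuple S y = w).

Definition comparable_ANS (S : ANS) : Prop :=
  S_recognizable S (fun y : 'I_2 -> nat => y ord0 <= y ord_max).

Definition S_automatic (S : ANS) (B : finType) (x : nat -> B) : Prop :=
  exists M : dfao (ans_sigma S) B, forall n, x n = dfao_eval M (rep S n).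

(* Orbit closure of x in B^N (product topology): the sequences all of whose
   prefixes occur as factors of x. *)
Definition orbit_closure (B : finType) (x : nat -> B) (y : nat -> B) : Prop :=
  forall k, exists i, forall j, j < k -> y j = x (i + j).

(* A strategy of Alice: given Bob's previous choices a_0..a_{j-1}, a set A_j. *)
Definition strategy (B : finType) := seq B -> {set B}.

(* alpha ∈ W(X): alpha is a choice sequence in {0,...,|A|-1}^N and Alice has a
   winning strategy in the game with choice sequence alpha. *)
Definition winning_shift (B : finType) (X : (nat -> B) -> Prop)
  (alpha : nat -> nat) : Prop :=
  (forall j, alpha j < #|B|) /\
  exists s : strategy B,
    (forall h : seq B, #|s h| = (alpha (size h)).+1) /\
    (forall a : nat -> B,
       (forall j, a j \in s (mkseq a j)) -> X a).

Definition infinite_coding_dimension (B : finType) (X : (nat -> B) -> Prop)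
  : Prop :=
  forall d : nat, exists y, winning_shift X y /\
    ~ (forall N, \sum_(i < N) y i <= d).

From mathcomp Require Import all_boot zify.
Set Implicit Arguments. Unset Strict Implicit.

(* A comparable abstract numeration system with an automatic word whose
   orbit closure is the whole full shift {0,1}^N.

   A marked word is a nonempty bit string [u] with a marked position [i].
   Ordering marked words by length, then by the binary value of [u], then
   by [i] gives an order of type omega: [rank] and [unrank] are inverse
   bijections with nat.  The numeration system writes the n-th marked word
   over the alphabet bool * bool (bit, is-marked).  Reading the marked bit
   of each word in turn gives an automatic word [marked_bit]; since the
   marked words with underlying string [u] are consecutive and mark the
   positions of [u] in order, [u] is a factor, so the orbit closure is the
   full shift, whose winning shift contains the constant sequence 1.
   Comparability is witnessed by an explicit automaton that checks both
   tracks and compares lengths, then first differing bits, then marks. *)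

Fixpoint bin_value (u : seq bool) : nat :=
  if u is b :: u' then b * 2 ^ size u' + bin_value u' else 0.

Lemma bin_value_lt u : bin_value u < 2 ^ size u.
Proof. by elim: u => [|b u IH] //=; rewrite expnS; case: b => /=; lia. Qed.

Lemma bin_value_nseq_false n : bin_value (nseq n false) = 0.
Proof. by elim: n. Qed.

Fixpoint first_diff (u v : seq bool) : option bool :=
  match u, v with
  | a :: u', b :: v' => if a == b then first_diff u' v' else Some b
  | _, _ => None
  end.

Lemma first_diffP u v : size u = size v ->
  match first_diff u v return Prop with
  | None => u = v
  | Some true => bin_value u < bin_value v
  | Some false => bin_value v < bin_value u
  end.
Proof.
elim: u v => [|a u IH] [|b v] //= [] Hs.
have := bin_value_lt u; have := bin_value_lt v; rewrite Hs => hv hu.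
have := IH v Hs.
by case: a; case: b => /=; case: (first_diff u v) => [[]|] //=; try lia;
  move=> ->.
Qed.

Fixpoint bin_incr (u : seq bool) : bool * seq bool :=
  if u is b :: u' then let (c, r) := bin_incr u' in (b && c, addb b c :: r)
  else (true, [::]).

Lemma bin_incrP u : size (bin_incr u).2 = size u /\
  bin_value (bin_incr u).2 + (bin_incr u).1 * 2 ^ size u = (bin_value u).+1.
Proof.
elim: u => [|b u IH] //=.
case: (bin_incr u) IH => c r /= [Hs Hv]; split; first by rewrite Hs.
by rewrite Hs expnS; case: b; case: c Hv => /=; lia.
Qed.

Definition marked_word := (seq bool * nat)%type.
Definition marked (t : marked_word) : bool := t.2 < size t.1.

(* Number of marked words of length less than [l]:
   sum over k < l of k * 2^k. *)
Fixpoint marked_below (l : nat) : nat :=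
  if l is l'.+1 then marked_below l' + l' * 2 ^ l' else 0.

Lemma marked_below_mono : {homo marked_below : m n / m <= n}.
Proof.
move=> m n; elim: n => [|n IH]; first by rewrite leqn0 => /eqP ->.
by rewrite leq_eqVlt => /orP [/eqP -> //|]; rewrite ltnS => /IH /=; lia.
Qed.

(* Position of a marked word in the order: by length, then by binary value,
   then by marked position. *)
Definition rank (t : marked_word) : nat :=
  marked_below (size t.1) + bin_value t.1 * size t.1 + t.2.

Lemma rank_bounds t : marked t ->
  marked_below (size t.1) <= rank t < marked_below (size t.1).+1.
Proof.
case: t => u i; rewrite /marked /rank /= => Hi.
have Hv := bin_value_lt u.
have : bin_value u * size u + i < 2 ^ size u * size u by nia.
lia.
Qed.

Lemma rank_lt_size t0 t1 : marked t0 -> marked t1 ->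
  size t0.1 < size t1.1 -> rank t0 < rank t1.
Proof.
move=> V0 V1 Hl; have := rank_bounds V0; have := rank_bounds V1.
by have := marked_below_mono Hl; lia.
Qed.

Lemma rank_le_same_size t0 t1 : marked t0 -> marked t1 ->
  size t0.1 = size t1.1 ->
  (rank t0 <= rank t1) = odflt (t0.2 <= t1.2) (first_diff t0.1 t1.1).
Proof.
case: t0 t1 => u0 i0 [u1 i1]; rewrite /marked /rank /= => H0 H1 Hs.
rewrite Hs; have := first_diffP Hs.
case: (first_diff u0 u1) => [[]|] /= H; last by subst; lia.
- by apply/idP; nia.
- by apply/negbTE; rewrite -ltnNge; nia.
Qed.

Lemma rank_inj t0 t1 : marked t0 -> marked t1 -> rank t0 = rank t1 -> t0 = t1.
Proof.
move=> V0 V1 E.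
have Hs : size t0.1 = size t1.1.
  case: (ltngtP (size t0.1) (size t1.1)) => // H.
  - by have := rank_lt_size V0 V1 H; lia.
  - by have := rank_lt_size V1 V0 H; lia.
case: t0 t1 V0 V1 E Hs => u0 i0 [u1 i1]; rewrite /marked /rank /= => H0 H1 E Hs.
rewrite Hs in E.
have := first_diffP Hs; case: (first_diff u0 u1) => [[]|] /= H; try nia.
by subst; congr pair; lia.
Qed.

Definition succ_marked (t : marked_word) : marked_word :=
  let (u, i) := t in
  if i.+1 < size u then (u, i.+1)
  else let (c, r) := bin_incr u in
       if c then (nseq (size u).+1 false, 0) else (r, 0).

Lemma succ_markedP t : marked t ->
  marked (succ_marked t) /\ rank (succ_marked t) = (rank t).+1.
Proof.
case: t => u i; rewrite /marked /= => Hi; rewrite /succ_marked.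
case: (ltnP i.+1 (size u)) => Hi1.
  by rewrite /marked /rank /= Hi1; split => //; lia.
have := bin_incrP u; have := bin_value_lt u.
case: (bin_incr u) => [[] r] /= Hv [Hs Hr].
- rewrite /marked /rank /= size_nseq bin_value_nseq_false; split => //; nia.
- by rewrite /marked /rank /= Hs; split; [lia | nia].
Qed.

Fixpoint unrank (n : nat) : marked_word :=
  if n is n'.+1 then succ_marked (unrank n') else ([:: false], 0).

Lemma unrankP n : marked (unrank n) /\ rank (unrank n) = n.
Proof.
elim: n => [|n [V R]] //=.
by have [-> ->] := succ_markedP V; rewrite R.
Qed.

Lemma unrankK t : marked t -> unrank (rank t) = t.
Proof.
by move=> V; have [V' R] := unrankP (rank t); exact: rank_inj V' V R.
Qed.

(* A marked word is written over the alphabet of pairs (bit, is-marked).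
   [encode_from u o] writes [u], marking the position [k] if [o = Some k]. *)
Definition letter := (bool * bool)%type.

Definition count_down (o : option nat) : option nat :=
  if o is Some k.+1 then Some k else None.

Fixpoint encode_from (u : seq bool) (o : option nat) : seq letter :=
  if u is b :: u' then (b, o == Some 0) :: encode_from u' (count_down o)
  else [::].

Definition encode (t : marked_word) : seq letter := encode_from t.1 (Some t.2).

Lemma size_encode_from u o : size (encode_from u o) = size u.
Proof. by elim: u o => //= b u IH o; rewrite IH. Qed.

Lemma bits_encode_from u o : map fst (encode_from u o) = u.
Proof. by elim: u o => //= b u IH o; rewrite IH. Qed.

Lemma encode_inj t0 t1 : marked t0 -> marked t1 -> encode t0 = encode t1 ->
  t0 = t1.
Proof.
case: t0 t1 => u0 i0 [u1 i1]; rewrite /marked /encode /=.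
elim: u0 u1 i0 i1 => [|a u IH] [|b v] //= i0 i1 H0 H1 [<- E1 E2].
case: i0 i1 H0 H1 E1 E2 => [|i0] [|i1] //= H0 H1 _ E.
- by have := congr1 (map fst) E; rewrite !bits_encode_from => ->.
- by case: (IH _ _ _ H0 H1 E) => -> ->.
Qed.

Definition marked_rep (n : nat) : seq letter := encode (unrank n).

Lemma marked_rep_inj : injective marked_rep.
Proof.
move=> m n E; have [Vm Rm] := unrankP m; have [Vn Rn] := unrankP n.
by rewrite -Rm -Rn (encode_inj Vm Vn E).
Qed.

Definition marked_ANS : ANS := MkANS marked_rep_inj.

Lemma marked_rep_rank t : marked t -> marked_rep (rank t) = encode t.
Proof. by move=> V; rewrite /marked_rep unrankK. Qed.

Lemma foldl_fixed (S A : Type) (f : S -> A -> S) (x : S) (s : seq A) :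
  (forall a, f x a = x) -> foldl f x s = x.
Proof. by move=> Hx; elim: s => //= a s IH; rewrite Hx. Qed.

(* The automatic word: its n-th letter is the marked bit of the n-th marked
   word.  Reading the marked words of a fixed string [u] in order spells [u],
   so every finite binary word is a factor. *)
Definition marked_bit (n : nat) : bool := nth false (unrank n).1 (unrank n).2.

Definition read_mark (s : option bool) (a : letter) : option bool :=
  if s is Some b then Some b else if a.2 then Some a.1 else None.

Lemma read_mark_encode u i : i < size u ->
  foldl read_mark None (encode_from u (Some i)) = Some (nth false u i).
Proof.
elim: u i => [|b u IH] [|i] //= Hi; [exact: foldl_fixed | exact: IH].
Qed.

Lemma marked_bit_automatic : S_automatic marked_ANS marked_bit.
Proof.
exists (DFAO None read_mark (odflt false)) => n.
rewrite /dfao_eval /= /marked_rep /encode /marked_bit.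
by have [V _] := unrankP n; rewrite read_mark_encode.
Qed.

Lemma marked_bit_factor u j : j < size u ->
  marked_bit (rank (u, 0) + j) = nth false u j.
Proof.
move=> Hj; have -> : rank (u, 0) + j = rank (u, j) by rewrite /rank /=; lia.
by rewrite /marked_bit unrankK.
Qed.

Lemma marked_bit_orbit_full (y : nat -> bool) : orbit_closure marked_bit y.
Proof.
move=> k; exists (rank (mkseq y k, 0)) => j Hj.
by rewrite marked_bit_factor ?size_mkseq // nth_mkseq.
Qed.

(* In the full shift over an alphabet of at least two letters Alice wins
   with the constant choice sequence |B|-1 by always offering every letter,
   so the winning shift contains a sequence with unbounded partial sums. *)
Lemma full_shift_infinite_coding_dimension (B : finType)
  (X : (nat -> B) -> Prop) :
  1 < #|B| -> (forall a, X a) -> infinite_coding_dimension X.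
Proof.
move=> HB HX d; exists (fun _ => #|B|.-1); split.
  split; first by move=> j; lia.
  exists (fun _ => setT); split; first by move=> h; rewrite cardsT; lia.
  by move=> a _; exact: HX.
move=> /(_ d.+1); rewrite sum_nat_const card_ord; nia.
Qed.

(* A pair of integers is read as a word over pairs of
   padded letters; the automaton below runs five automata in parallel: one
   per track checking that it is a padded encoding of a marked word, one
   comparing lengths through the padding, one finding the first differing
   bit and one finding which track shows its mark first. *)
Definition pair_letter := tletter marked_ANS 2.

Definition track (j : 'I_2) (w : seq pair_letter) : seq (option letter) :=
  map (fun l : pair_letter => l j) w.

(* Track checker, state [Some (started, seen_mark)] or [None] (reject). *)
Definition track_step (s : option (bool * bool)) (a : option letter) :=
  match s, a with
  | None, _ => None
  | Some (started, seen), None => if started then None else Some (false, seen)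
  | Some (_, seen), Some (_, m) =>
      if seen && m then None else Some (true, seen || m)
  end.

Definition track_start : option (bool * bool) := Some (false, false).

Lemma track_run_pad p :
  foldl track_step track_start (nseq p None) = track_start.
Proof. by elim: p. Qed.

Lemma track_run_after_mark u :
  foldl track_step (Some (true, true)) (map Some (encode_from u None))
  = Some (true, true).
Proof. by elim: u. Qed.

Lemma track_run_marked u i st : i < size u ->
  foldl track_step (Some (st, false)) (map Some (encode_from u (Some i)))
  = Some (true, true).
Proof.
elim: u i st => [|b u IH] [|i] st //= Hi.
  exact: track_run_after_mark.
exact: IH.
Qed.

Lemma track_run_encode p t : marked t ->
  foldl track_step track_start (nseq p None ++ map Some (encode t))
  = Some (true, true).
Proof.
by case: t => u i Hi; rewrite foldl_cat track_run_pad track_run_marked.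
Qed.

Lemma track_run_started s seen :
  foldl track_step (Some (true, seen)) s = Some (true, true) ->
  exists r, s = map Some r /\ count snd r + seen = 1.
Proof.
elim: s seen => [|a s IH] seen /=; first by case=> ->; exists [::].
case: a => [[b m]|] /=; last by rewrite foldl_fixed.
case: ifP => Hm; first by rewrite foldl_fixed.
case/IH => r [-> Hc]; exists ((b, m) :: r); split => //=.
by move: Hc Hm; case: seen; case: m => /=; lia.
Qed.

Lemma encode_unmarked r : count snd r = 0 -> r = encode_from (map fst r) None.
Proof. by elim: r => [|[b [] ] r IH] //= Hc; rewrite -IH. Qed.

Lemma encode_decode r : count snd r = 1 ->
  marked (map fst r, find snd r) /\ r = encode (map fst r, find snd r).
Proof.
rewrite /marked /encode /=; elim: r => [|[b m] r IH] //=.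
case: m => /= Hc; first by split; [lia | rewrite -encode_unmarked //; lia].
have [H E] := IH Hc; split; first by rewrite /= size_map in H *; lia.
by rewrite -E.
Qed.

Lemma track_run_inv s :
  foldl track_step track_start s = Some (true, true) ->
  exists p t, marked t /\ s = nseq p None ++ map Some (encode t).
Proof.
elim: s => [|a s IH] //=; case: a => [[b m]|] /=; last first.
  by case/IH => p [t [V ->]]; exists p.+1, t.
case/track_run_started => r [-> Hc].
have [V E] := @encode_decode ((b, m) :: r) ltac:(by rewrite /=; lia).
by exists 0, (map fst ((b, m) :: r), find snd ((b, m) :: r)); rewrite -E.
Qed.

Definition pair_run (S : Type) (f : S -> option letter -> option letter -> S)
  (s : S) (w : seq pair_letter) : S :=
  foldl (fun s (l : pair_letter) => f s (l ord0) (l ord_max)) s w.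

(* [Some (Some true)]: the first track is shorter (its padding is longer);
   [Some None]: same length; [Some (Some false)]: otherwise. *)
Definition length_step (s : option (option bool)) (a0 a1 : option letter) :=
  if s is Some _ then s else
  match a0, a1 with
  | None, Some _ => Some (Some true)
  | Some _, Some _ => Some None
  | _, _ => Some (Some false)
  end.

Definition bit_step (s : option bool) (a0 a1 : option letter) :=
  match s, a0, a1 with
  | None, Some (b0, _), Some (b1, _) => if b0 == b1 then None else Some b1
  | _, _, _ => s
  end.

(* Whether the first track is marked no later than the second. *)
Definition mark_step (s : option bool) (a0 a1 : option letter) :=
  match s, a0, a1 with
  | None, Some (_, m0), Some (_, m1) => if m0 || m1 then Some m0 else None
  | _, _, _ => s
  end.

Definition le_state := (option (bool * bool) * option (bool * bool)
  * option (option bool) * option bool * option bool)%type.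

Definition le_step (st : le_state) (l : pair_letter) : le_state :=
  let: (s0, s1, len, bit, mark) := st in
  let a0 := l ord0 in let a1 := l ord_max in
  (track_step s0 a0, track_step s1 a1, length_step len a0 a1,
   bit_step bit a0 a1, mark_step mark a0 a1).

Definition le_final (st : le_state) : bool :=
  let: (s0, s1, len, bit, mark) := st in
  [&& s0 == Some (true, true), s1 == Some (true, true) &
      (len == Some (Some true))
      || (len == Some None) && odflt (odflt false mark) bit].

Definition le_dfa : dfa pair_letter :=
  DFA (track_start, track_start, None, None, None) le_step le_final.

Lemma le_dfa_run s0 s1 len bit mark w :
  foldl le_step (s0, s1, len, bit, mark) w =
  (foldl track_step s0 (track ord0 w), foldl track_step s1 (track ord_max w),
   pair_run length_step len w, pair_run bit_step bit w,
   pair_run mark_step mark w).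
Proof. by elim: w s0 s1 len bit mark => //= l w IH *; rewrite IH. Qed.

Lemma pair_run_zip (S : Type) f (s : S) w r0 r1 :
  track ord0 w = map Some r0 -> track ord_max w = map Some r1 ->
  pair_run f s w = foldl (fun s p => f s (Some p.1) (Some p.2)) s (zip r0 r1).
Proof.
elim: w s r0 r1 => [|l w IH] s [|a r0] [|b r1] //= [E0 H0] [E1 H1].
by rewrite /pair_run /= E0 E1; apply: IH.
Qed.

Lemma bit_run u0 u1 o0 o1 :
  foldl (fun s p => bit_step s (Some p.1) (Some p.2)) None
    (zip (encode_from u0 o0) (encode_from u1 o1)) = first_diff u0 u1.
Proof.
elim: u0 u1 o0 o1 => [|a u0 IH] [|b u1] o0 o1 //=.
by case: eqP => _; [exact: IH | exact: foldl_fixed].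
Qed.

Lemma mark_run u0 u1 i0 i1 : i0 < size u0 -> i1 < size u1 ->
  foldl (fun s p => mark_step s (Some p.1) (Some p.2)) None
    (zip (encode_from u0 (Some i0)) (encode_from u1 (Some i1)))
  = Some (i0 <= i1).
Proof.
elim: u0 u1 i0 i1 => [|a u0 IH] [|b u1] [|i0] [|i1] //= H0 H1;
  try exact: foldl_fixed.
by rewrite IH.
Qed.

Lemma length_run w p0 p1 r0 r1 : r0 != [::] -> r1 != [::] ->
  track ord0 w = nseq p0 None ++ map Some r0 ->
  track ord_max w = nseq p1 None ++ map Some r1 ->
  pair_run length_step None w =
  if p0 == 0 then (if p1 == 0 then Some None else Some (Some false))
  else if p1 == 0 then Some (Some true) else Some (Some false).
Proof.
case: w => [|l w]; first by case: p0 r0 => [|?] [|??].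
move=> N0 N1 /(congr1 (head None)) /= F0 /(congr1 (head None)) /= F1.
rewrite /pair_run /= F0 F1.
by case: p0 r0 N0 {F0} => [|p0] [|a0 r0] //= _;
  case: p1 r1 N1 {F1} => [|p1] [|a1 r1] //= _; rewrite foldl_fixed.
Qed.

Lemma same_size_verdict w t0 t1 : marked t0 -> marked t1 ->
  track ord0 w = map Some (encode t0) ->
  track ord_max w = map Some (encode t1) ->
  odflt (odflt false (pair_run mark_step None w)) (pair_run bit_step None w)
  = (rank t0 <= rank t1).
Proof.
case: t0 t1 => u0 i0 [u1 i1] V0 V1 H0 H1.
rewrite !(pair_run_zip _ _ H0 H1) bit_run mark_run //=.
have Hs : size u0 = size u1.
  move: (congr1 size H0) (congr1 size H1).
  by rewrite !size_map /encode !size_encode_from /= => <-.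
by rewrite rank_le_same_size.
Qed.

(* Correctness of the automaton on padded encodings: it accepts iff one
   track is unpadded (the padding is minimal) and the ranks are ordered. *)
Lemma le_dfa_accepts w p0 p1 t0 t1 : marked t0 -> marked t1 ->
  track ord0 w = nseq p0 None ++ map Some (encode t0) ->
  track ord_max w = nseq p1 None ++ map Some (encode t1) ->
  dfa_accepts le_dfa w = ((p0 == 0) || (p1 == 0)) && (rank t0 <= rank t1).
Proof.
move=> V0 V1 H0 H1.
have Hsize : p0 + size t0.1 = p1 + size t1.1.
  move: (congr1 size H0) (congr1 size H1).
  rewrite !size_map !size_cat !size_nseq !size_map /encode.
  by rewrite !size_encode_from => <-.
have nonempty t : marked t -> encode t != [::].
  by case: t => [[|??] ?]; rewrite /marked.
rewrite /dfa_accepts /= le_dfa_run H0 H1 !track_run_encode //=.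
rewrite (length_run (nonempty _ V0) (nonempty _ V1) H0 H1).
case: p0 H0 Hsize => [|p0] H0 Hsize; case: p1 H1 Hsize => [|p1] H1 Hsize //=.
- by rewrite (same_size_verdict V0 V1 H0 H1).
- by apply/esym/negbTE; rewrite -ltnNge rank_lt_size //; lia.
- by apply/esym/ltnW; rewrite rank_lt_size //; lia.
Qed.

Lemma mkseq_pad (T : Type) (w : seq T) m : size w <= m ->
  mkseq (fun k => if k < m - size w then None
                  else nth None (map Some w) (k - (m - size w))) m
  = nseq (m - size w) None ++ map Some w.
Proof.
move=> Hm; apply: (@eq_from_nth _ None).
  by rewrite size_mkseq size_cat size_nseq size_map subnK.
move=> k; rewrite size_mkseq => Hk; rewrite nth_mkseq // nth_cat size_nseq.
by case: ifP => // _; rewrite nth_nseq; case: ifP.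
Qed.

Lemma ord2P (j : 'I_2) : j = ord0 \/ j = ord_max.
Proof. by case: j => [[|[|j]] Hj] //; [left | right]; apply: val_inj. Qed.

Lemma track_rep_tuple (y : 'I_2 -> nat) j :
  track j (rep_tuple marked_ANS y) =
  nseq (maxn (size (marked_rep (y ord0))) (size (marked_rep (y ord_max)))
        - size (marked_rep (y j))) None
  ++ map Some (marked_rep (y j)).
Proof.
rewrite /rep_tuple /track.
have -> : \max_(i < 2) size (rep marked_ANS (y i)) =
          maxn (size (marked_rep (y ord0))) (size (marked_rep (y ord_max))).
  rewrite big_ord_recr big_ord_recr big_ord0 /= max0n.
  by congr maxn; congr (size (marked_rep (y _))); apply: val_inj.
rewrite -mkseq_pad; last first.
  by case: (ord2P j) => ->; [exact: leq_maxl | exact: leq_maxr].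
by rewrite /mkseq -map_comp; apply: eq_map => k /=; rewrite ffunE.
Qed.

Lemma tracks_inj (w1 w2 : seq pair_letter) :
  track ord0 w1 = track ord0 w2 -> track ord_max w1 = track ord_max w2 ->
  w1 = w2.
Proof.
elim: w1 w2 => [|a w1 IH] [|b w2] //= [Ea E0] [Eb E1].
rewrite (IH w2) //; congr cons; apply/ffunP => j.
by case: (ord2P j) => ->.
Qed.

Lemma rep_tuple_of_tracks w p0 p1 t0 t1 : marked t0 -> marked t1 ->
  (p0 == 0) || (p1 == 0) ->
  track ord0 w = nseq p0 None ++ map Some (encode t0) ->
  track ord_max w = nseq p1 None ++ map Some (encode t1) ->
  rep_tuple marked_ANS
    (fun j : 'I_2 => if val j == 0 then rank t0 else rank t1) = w.
Proof.
move=> V0 V1 Hp H0 H1.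
have Hsize : p0 + size (encode t0) = p1 + size (encode t1).
  move: (congr1 size H0) (congr1 size H1).
  by rewrite !size_cat !size_nseq !size_map => <-.
apply: tracks_inj; rewrite track_rep_tuple /= !marked_rep_rank //.
- by rewrite H0; congr (nseq _ _ ++ _); move: Hp; lia.
- by rewrite H1; congr (nseq _ _ ++ _); move: Hp; lia.
Qed.

Lemma marked_ANS_comparable : comparable_ANS marked_ANS.
Proof.
exists le_dfa => w; split.
- move=> Hacc; have := Hacc.
  rewrite /dfa_accepts /= le_dfa_run /= => /and3P [/eqP T0 /eqP T1 _].
  have [p0 [t0 [V0 E0]]] := track_run_inv T0.
  have [p1 [t1 [V1 E1]]] := track_run_inv T1.
  move: Hacc; rewrite (le_dfa_accepts V0 V1 E0 E1) => /andP [Hp Hle].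
  by eexists; split; last exact: rep_tuple_of_tracks Hp E0 E1.
- move=> [y [Hle <-]].
  have [V0 R0] := unrankP (y ord0); have [V1 R1] := unrankP (y ord_max).
  rewrite (le_dfa_accepts V0 V1 (track_rep_tuple _ _) (track_rep_tuple _ _)).
  by rewrite R0 R1 Hle andbT; apply/orP; lia.
Qed.

Theorem mainTheorem9 :
  exists (S : ANS) (B : finType) (x : nat -> B),
    comparable_ANS S /\ S_automatic S x /\
    infinite_coding_dimension (orbit_closure x).
Proof.
exists marked_ANS, bool, marked_bit; split; first exact: marked_ANS_comparable.
split; first exact: marked_bit_automatic.
apply: full_shift_infinite_coding_dimension; first by rewrite card_bool.
exact: marked_bit_orbit_full.
Qed.
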